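(* Let $(q_n)_{n\geqslant1}$, $q_n:[0,\infty)\to\mathbf R$, be a sequence of nondecreasing functions such that $(q_n(t))_{n\geqslant1}$ is bounded for every fixed $t\geqslant0$. Let $\tilde q(t)=\limsup_{n\to\infty}q_n(t)$ and $\alpha=\lim_{t\to\infty}\tilde q(t)$. Then for any $\beta<\alpha$ there exist a subsequence $(q_{n_k})_{k\geqslant1}$ and a nondecreasing function $q:[0,\infty)\to\mathbf R$ such that $q_{n_k}(t)\to q(t)$ as $k\to\infty$ for every $t\geqslant0$, and $\lim_{t\to\infty}q(t)>\beta$. *)

From Stdlib Require Import Reals.
From Coquelicot Require Export Coquelicot.
Open Scope R_scope.

(* A function [0,oo) -> R is modelled as f : R -> R; only values at t >= 0 matter. *)
Definition nondecr_nonneg (f : R -> R) : Prop :=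
  forall s t, 0 <= s -> s <= t -> f s <= f t.

Definition qtilde (qs : nat -> R -> R) (t : R) : Rbar :=
  LimSup_seq (fun n => qs n t).

(* Choose T with limsup_n q_n(T) > beta and pass to indices with q_n(T) > b > beta.
   Helly's selection theorem then extracts a pointwise convergent subsequence: a
   diagonal extraction makes it converge at every rational; by monotonicity
   limsup_k q_k(s) <= liminf_k q_k(t) whenever s < t, so convergence can only fail
   at points t where liminf < limsup, and these open gaps are pairwise disjoint,
   hence countably many, so a second diagonal extraction handles them.  The limit q
   is nondecreasing with q(T) >= b > beta, so its limit at infinity exceeds beta. *)
From Stdlib Require Import Reals Lra Lia ZArith Classical ClassicalEpsilon Cantor.
From Coquelicot Require Import Coquelicot.
Open Scope R_scope.

Definition strictly_increasing (phi : nat -> nat) : Prop :=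
  forall k, (phi k < phi (S k))%nat.

Lemma strictly_increasing_lt phi m n :
  strictly_increasing phi -> (m < n)%nat -> (phi m < phi n)%nat.
Proof.
  intros Hphi Hmn. induction n as [|n IH]; [lia|].
  destruct (Nat.eq_dec m n) as [->|Hne]; [apply Hphi|].
  specialize (Hphi n). specialize (IH ltac:(lia)). lia.
Qed.

Lemma strictly_increasing_ge_id phi n : strictly_increasing phi -> (n <= phi n)%nat.
Proof. intros Hphi. induction n as [|n IH]; [lia|]. specialize (Hphi n). lia. Qed.

Lemma strictly_increasing_comp phi chi :
  strictly_increasing phi -> strictly_increasing chi ->
  strictly_increasing (fun k => phi (chi k)).
Proof. intros Hphi Hchi k. apply strictly_increasing_lt; [exact Hphi | apply Hchi]. Qed.

Lemma increasing_witnesses (P : nat -> nat -> Prop) :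
  (forall k N, exists n, (N <= n)%nat /\ P k n) ->
  exists phi, strictly_increasing phi /\ forall k, P k (phi k).
Proof.
  intros HP.
  destruct (choice (fun kN n => (snd kN <= n)%nat /\ P (fst kN) n))
    as [f Hf]; [intros [k N]; apply HP|].
  set (phi := fix phi k := match k with O => f (O, O) | S j => f (S j, S (phi j)) end).
  exists phi. split.
  - intros k. destruct (Hf (S k, S (phi k))) as [Hge _]. simpl in Hge |- *. lia.
  - intros [|k]; [exact (proj2 (Hf (O, O))) | exact (proj2 (Hf (S k, S (phi k))))].
Qed.

Lemma bounded_seq_cv_subseq (u : nat -> R) M :
  (forall n, Rabs (u n) <= M) ->
  exists phi, strictly_increasing phi /\ exists l : R, is_lim_seq (fun k => u (phi k)) l.
Proof.
  intros Hb.
  destruct (Bolzano_Weierstrass u (fun c => -M <= c <= M) (compact_P3 _ _)) as [l Hl].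
  { intros n. exact (proj1 (Rabs_le_between _ _) (Hb n)). }
  (* [l] is a cluster value: pick the k-th index within 1/(k+1) of [l]. *)
  destruct (increasing_witnesses (fun k n => Rabs (u n - l) < / (INR k + 1)))
    as [phi [Hphi Hclose]].
  { intros k N.
    assert (Hpos : 0 < / (INR k + 1)) by (pose proof (pos_INR k); apply Rinv_0_lt_compat; lra).
    destruct (Hl (disc l (mkposreal _ Hpos)) N) as [n Hn]; [|now exists n].
    exists (mkposreal _ Hpos). now intros y Hy. }
  exists phi. split; [exact Hphi|]. exists l.
  apply is_lim_seq_spec. intros eps.
  destruct (archimed_cor1 eps (cond_pos eps)) as [N [HN HN0]].
  exists N. intros n Hn. eapply Rlt_trans; [apply Hclose|].
  eapply Rle_lt_trans; [|exact HN].
  apply Rinv_le_contravar; [apply lt_0_INR; lia|].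
  apply le_INR in Hn. lra.
Qed.

Lemma is_lim_seq_eventual_subseq (v w : nat -> R) (l : R) i :
  is_lim_seq v l -> (forall k, (i <= k)%nat -> exists j, (k <= j)%nat /\ w k = v j) ->
  is_lim_seq w l.
Proof.
  intros Hv Hw. apply is_lim_seq_spec in Hv. apply is_lim_seq_spec.
  intros eps. destruct (Hv eps) as [N HN]. exists (max N i). intros k Hk.
  destruct (Hw k ltac:(lia)) as [j [Hj ->]]. apply HN. lia.
Qed.

Lemma diagonal_cv_subseq (u : nat -> nat -> R) :
  (forall i, exists M, forall n, Rabs (u i n) <= M) ->
  exists phi, strictly_increasing phi /\
    forall i, exists l : R, is_lim_seq (fun k => u i (phi k)) l.
Proof.
  intros Hb.
  destruct (choice (fun (iphi : nat * (nat -> nat)) chi => strictly_increasing chi /\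
      exists l : R, is_lim_seq (fun k => u (fst iphi) (snd iphi (chi k))) l)) as [E HE].
  { intros [i phi]. destruct (Hb i) as [M HM].
    exact (bounded_seq_cv_subseq (fun n => u i (phi n)) M (fun n => HM _)). }
  (* Along [Phi i] the sequences [u 0], ..., [u (i-1)] converge. *)
  set (Phi := fix Phi i := match i with
              | O => fun n => n
              | S j => fun n => Phi j (E (j, Phi j) n) end).
  assert (HPhi : forall i, strictly_increasing (Phi i)).
  { induction i as [|i IH]; [intros k; simpl; lia|].
    exact (strictly_increasing_comp _ _ IH (proj1 (HE (i, Phi i)))). }
  assert (Hsub : forall i d k, exists j, (k <= j)%nat /\ Phi (d + i)%nat k = Phi i j).
  { intros i d; induction d as [|d IH]; intros k; [now exists k|].
    simpl. destruct (IH (E (d + i, Phi (d + i)) k)%nat) as [j [Hj ->]].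
    exists j; split; [|reflexivity].
    pose proof (strictly_increasing_ge_id _ k (proj1 (HE (d + i, Phi (d + i))%nat))). lia. }
  exists (fun k => Phi (S k) k). split.
  - intros k. change (Phi (S k) k < Phi (S k) (E (S k, Phi (S k)) (S k)))%nat.
    apply strictly_increasing_lt; [apply HPhi|].
    pose proof (strictly_increasing_ge_id _ (S k) (proj1 (HE (S k, Phi (S k))))). lia.
  - intros i. destruct (proj2 (HE (i, Phi i))) as [l Hl]. exists l.
    apply (is_lim_seq_eventual_subseq _ _ l i Hl). intros k Hk.
    destruct (Hsub (S i) (S k - S i) k)%nat as [j [Hj Hj']].
    replace (S k - S i + S i)%nat with (S k) in Hj' by lia.
    exists j. split; [exact Hj|].
    change (u i (Phi (S k) k) = u i (Phi (S i) j)). now rewrite Hj'.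
Qed.

Lemma is_lim_seq_bounded_finite (u : nat -> R) M (l : Rbar) :
  (forall n, Rabs (u n) <= M) -> is_lim_seq u l -> exists x : R, l = Finite x.
Proof.
  intros Hb Hl.
  assert (Hup : Rbar_le l M).
  { apply (is_lim_seq_le u (fun _ => M)); [|exact Hl|apply is_lim_seq_const].
    intros n; specialize (Hb n); apply Rabs_le_between in Hb; lra. }
  assert (Hlow : Rbar_le (-M) l).
  { apply (is_lim_seq_le (fun _ => -M) u); [|apply is_lim_seq_const|exact Hl].
    intros n; specialize (Hb n); apply Rabs_le_between in Hb; lra. }
  destruct l as [x| |]; simpl in *; try contradiction. eauto.
Qed.

(* Every rational (a - c)/(b + 1) with a, b, c : nat has a code i. *)
Definition rat_enum (i : nat) : R :=
  let (a, p) := of_nat i in let (b, c) := of_nat p in (INR a - INR c) / (INR b + 1).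

Lemma rat_enum_dense s t : s < t -> exists i, s < rat_enum i < t.
Proof.
  intros Hst.
  destruct (archimed_cor1 (t - s) ltac:(lra)) as [b [Hb Hb0]].
  set (k := up (s * (INR b + 1))).
  exists (to_nat (Z.to_nat k, to_nat (b, Z.to_nat (- k)))).
  unfold rat_enum. rewrite !cancel_of_to.
  assert (Hk : INR (Z.to_nat k) - INR (Z.to_nat (- k)) = IZR k).
  { rewrite !INR_IZR_INZ, <- minus_IZR. apply f_equal. lia. }
  rewrite Hk.
  destruct (archimed (s * (INR b + 1))) as [H1 H2]. fold k in H1, H2.
  assert (HB : 0 < INR b + 1) by (pose proof (pos_INR b); lra).
  assert (HB' : / (INR b + 1) < t - s).
  { eapply Rlt_trans; [|exact Hb]. apply Rinv_lt_contravar; [|lra].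
    apply Rmult_lt_0_compat; [apply lt_0_INR; lia | lra]. }
  split.
  - apply Rmult_lt_reg_r with (INR b + 1); [lra|].
    replace (IZR k / (INR b + 1) * (INR b + 1)) with (IZR k) by (field; lra). lra.
  - replace (IZR k / (INR b + 1)) with ((IZR k - s * (INR b + 1)) * / (INR b + 1) + s)
      by (field; lra).
    assert ((IZR k - s * (INR b + 1)) * / (INR b + 1) <= / (INR b + 1)).
    { rewrite <- (Rmult_1_l (/ (INR b + 1))) at 2. apply Rmult_le_compat_r.
      - left; apply Rinv_0_lt_compat; lra.
      - lra. }
    lra.
Qed.

Lemma rat_enum_dense_Rbar (a b : Rbar) :
  Rbar_lt a b -> exists i, Rbar_lt a (rat_enum i) /\ Rbar_lt (rat_enum i) b.
Proof.
  destruct a as [x| |], b as [y| |]; simpl; intros H; try contradiction.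
  - destruct (rat_enum_dense x y H) as [i Hi]; exists i; simpl; lra.
  - destruct (rat_enum_dense x (x + 1) ltac:(lra)) as [i Hi]; exists i; simpl; lra.
  - destruct (rat_enum_dense (y - 1) y ltac:(lra)) as [i Hi]; exists i; simpl; lra.
  - destruct (rat_enum_dense 0 1 ltac:(lra)) as [i Hi]; exists i; simpl; lra.
Qed.

Lemma nondecr_LimSup_le_LimInf (f : nat -> R -> R) s r t :
  (forall n, nondecr_nonneg (f n)) -> 0 <= s -> s <= r -> r <= t ->
  ex_lim_seq (fun n => f n r) ->
  Rbar_le (LimSup_seq (fun n => f n s)) (LimInf_seq (fun n => f n t)).
Proof.
  intros Hmon Hs Hsr Hrt Hr. apply ex_lim_LimSup_LimInf_seq in Hr.
  apply Rbar_le_trans with (LimSup_seq (fun n => f n r)).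
  - apply LimSup_le. exists O. intros n _. apply Hmon; lra.
  - rewrite Hr. apply LimInf_le. exists O. intros n _. apply Hmon; lra.
Qed.

(* Each gap (Li t, Ls t) contains a rational, and distinct gaps are disjoint. *)
Lemma gaps_enumerable (Li Ls : R -> Rbar) :
  (forall s t, 0 <= s -> s < t -> Rbar_le (Ls s) (Li t)) ->
  exists e : nat -> R, (forall i, 0 <= e i) /\
    forall t, 0 <= t -> Rbar_lt (Li t) (Ls t) -> exists i, e i = t.
Proof.
  intros Hsep.
  set (gap i t := 0 <= t /\ Rbar_lt (Li t) (rat_enum i) /\ Rbar_lt (rat_enum i) (Ls t)).
  assert (Hle : forall i t1 t2, gap i t1 -> gap i t2 -> t1 <= t2).
  { intros i t1 t2 [_ [A1 _]] [H2 [_ A4]]. apply Rnot_lt_le. intros Hlt.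
    apply (Rbar_lt_not_le _ _ A1), Rbar_lt_le, (Rbar_lt_le_trans _ _ _ A4).
    exact (Hsep t2 t1 H2 Hlt). }
  destruct (choice (fun i x => 0 <= x /\ forall t, gap i t -> x = t)) as [e He].
  { intros i. destruct (classic (exists t, gap i t)) as [[t Ht]|Hnone].
    - exists t. split; [apply Ht|]. intros t' Ht'. apply Rle_antisym; eapply Hle; eassumption.
    - exists 0. split; [lra|]. intros t Ht. exfalso. eauto. }
  exists e. split; [intros i; apply He|].
  intros t Ht Hgap. destruct (rat_enum_dense_Rbar _ _ Hgap) as [i [H1 H2]].
  exists i. apply He. repeat split; assumption.
Qed.

Theorem helly_selection (f : nat -> R -> R) :
  (forall n, nondecr_nonneg (f n)) ->
  (forall t, 0 <= t -> exists M, forall n, Rabs (f n t) <= M) ->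
  exists phi, strictly_increasing phi /\
    forall t, 0 <= t -> exists l : R, is_lim_seq (fun k => f (phi k) t) l.
Proof.
  intros Hmon Hbd.
  destruct (diagonal_cv_subseq (fun i n => f n (Rabs (rat_enum i)))) as [phi1 [Hphi1 Hrat]].
  { intros i. exact (Hbd _ (Rabs_pos _)). }
  set (g := fun k => f (phi1 k)).
  set (Li := fun t => LimInf_seq (fun k => g k t)).
  set (Ls := fun t => LimSup_seq (fun k => g k t)).
  destruct (gaps_enumerable Li Ls) as [e [He_nonneg He]].
  { intros s t Hs Hst. destruct (rat_enum_dense s t Hst) as [i Hi].
    apply (nondecr_LimSup_le_LimInf g s (rat_enum i) t); try lra.
    - intros n; apply Hmon.
    - destruct (Hrat i) as [l Hl]. exists l. now rewrite Rabs_right in Hl by lra. }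
  destruct (diagonal_cv_subseq (fun i k => g k (e i))) as [phi2 [Hphi2 Hgap]].
  { intros i. destruct (Hbd (e i) (He_nonneg i)) as [M HM]. exists M; intros; apply HM. }
  exists (fun k => phi1 (phi2 k)). split; [now apply strictly_increasing_comp|].
  intros t Ht. destruct (Rbar_lt_dec (Li t) (Ls t)) as [Hlt|Hge].
  - destruct (He t Ht Hlt) as [i <-]. exact (Hgap i).
  - assert (Hcv : ex_lim_seq (fun k => g k t)).
    { apply ex_lim_LimSup_LimInf_seq, Rbar_le_antisym.
      - now apply Rbar_not_lt_le.
      - apply LimSup_LimInf_seq_le. }
    destruct Hcv as [l Hl].
    apply (is_lim_seq_subseq _ _ phi2 (eventually_subseq _ Hphi2)) in Hl.
    destruct (Hbd t Ht) as [M HM].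
    destruct (is_lim_seq_bounded_finite _ M _ (fun n => HM _) Hl) as [x ->].
    now exists x.
Qed.

Lemma nondecr_is_lim_pinfty (q : R -> R) :
  nondecr_nonneg q ->
  exists l : Rbar, is_lim q p_infty l /\ forall t, 0 <= t -> Rbar_le (q t) l.
Proof.
  intros Hmon.
  set (values := fun y => exists t, 0 <= t /\ y = q t).
  destruct (Lub_Rbar_correct values) as [Hub Hleast].
  assert (Hle : forall t, 0 <= t -> Rbar_le (q t) (Lub_Rbar values)).
  { intros t Ht. apply Hub. now exists t. }
  assert (Happrox : forall c : R, Rbar_lt c (Lub_Rbar values) -> exists t0, 0 <= t0 /\ c < q t0).
  { intros c Hc. apply NNPP. intros Hnone.
    apply (Rbar_lt_not_le _ _ Hc), Hleast. intros x [t [Ht ->]]. simpl.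
    apply Rnot_lt_le. intros Hx. apply Hnone. eauto. }
  exists (Lub_Rbar values). split; [|exact Hle].
  apply is_lim_spec.
  destruct (Lub_Rbar values) as [L| |].
  - intros eps. destruct (Happrox (L - eps)) as [t0 [Ht0 Hqt0]].
    { simpl. pose proof (cond_pos eps). lra. }
    exists t0. intros x Hx. pose proof (Hmon t0 x Ht0 ltac:(lra)).
    pose proof (Hle x ltac:(lra)) as Hx'. simpl in Hx'.
    apply Rabs_lt_between. lra.
  - intros M. destruct (Happrox M) as [t0 [Ht0 Hqt0]]; [exact I|].
    exists t0. intros x Hx. pose proof (Hmon t0 x Ht0 ltac:(lra)). lra.
  - exfalso. exact (Hle 0 (Rle_refl 0)).
Qed.

Lemma is_lim_pinfty_eventually_gt (f : R -> R) (alpha : Rbar) (beta : R) :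
  is_lim f p_infty alpha -> Rbar_lt beta alpha -> exists M, forall t, M < t -> beta < f t.
Proof.
  intros Hlim Hlt. apply is_lim_spec in Hlim.
  destruct alpha as [a| |]; simpl in Hlt; try contradiction.
  - destruct (Hlim (mkposreal (a - beta) ltac:(lra))) as [M HM].
    exists M. intros t Ht. specialize (HM t Ht). simpl in HM.
    apply Rabs_lt_between in HM. lra.
  - exact (Hlim beta).
Qed.

Lemma LimSup_gt_frequently (u : nat -> R) M beta :
  (forall n, Rabs (u n) <= M) -> beta < real (LimSup_seq u) ->
  exists b, beta < b /\ forall N, exists n, (N <= n)%nat /\ b < u n.
Proof.
  intros Hb. unfold LimSup_seq. destruct (ex_LimSup_seq u) as [[c| |] Hc]; simpl; intros Hlt.
  - exists ((c + beta) / 2). split; [lra|]. intros N.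
    destruct (proj1 (Hc (mkposreal ((c - beta) / 2) ltac:(lra))) N) as [n [HN Hn]].
    exists n. split; [exact HN|]. simpl in Hn. lra.
  - exists (beta + 1). split; [lra|]. intros N. apply Hc.
  - destruct (Hc (- M - 1)) as [N HN]. specialize (HN N (le_n _)).
    specialize (Hb N). apply Rabs_le_between in Hb. lra.
Qed.

Theorem lemma2p3 (qs : nat -> R -> R) (alpha : Rbar) (beta : R) :
  (forall n, nondecr_nonneg (qs n)) ->
  (forall t, 0 <= t -> exists M, forall n, Rabs (qs n t) <= M) ->
  is_lim (fun t => real (qtilde qs t)) p_infty alpha ->
  Rbar_lt (Finite beta) alpha ->
  exists (phi : nat -> nat) (q : R -> R),
    (forall k, (phi k < phi (S k))%nat) /\
    nondecr_nonneg q /\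
    (forall t, 0 <= t -> is_lim_seq (fun k => qs (phi k) t) (Finite (q t))) /\
    exists l : Rbar, is_lim q p_infty l /\ Rbar_lt (Finite beta) l.
Proof.
  intros Hmon Hbd Hlim Hlt.
  destruct (is_lim_pinfty_eventually_gt _ _ _ Hlim Hlt) as [M HM].
  set (T := Rmax M 0 + 1).
  assert (HT0 : 0 <= T) by (unfold T; pose proof (Rmax_r M 0); lra).
  destruct (Hbd T HT0) as [MT HMT].
  destruct (LimSup_gt_frequently (fun n => qs n T) MT beta HMT) as [b [Hbeta Hfreq]].
  { apply HM. unfold T. pose proof (Rmax_l M 0). lra. }
  destruct (increasing_witnesses (fun _ n => b < qs n T)) as [psi [Hpsi HpsiT]].
  { intros _ N. apply Hfreq. }
  destruct (helly_selection (fun n => qs (psi n))) as [phi [Hphi Hcv]].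
  { intros n. apply Hmon. }
  { intros t Ht. destruct (Hbd t Ht) as [Mt HMt]. exists Mt. intros n. apply HMt. }
  set (q := fun t => real (Lim_seq (fun k => qs (psi (phi k)) t))).
  assert (Hq : forall t, 0 <= t -> is_lim_seq (fun k => qs (psi (phi k)) t) (q t)).
  { intros t Ht. destruct (Hcv t Ht) as [l Hl]. unfold q.
    now rewrite (is_lim_seq_unique _ _ Hl). }
  assert (Hqmon : nondecr_nonneg q).
  { intros s t Hs Hst.
    exact (is_lim_seq_le _ _ _ _ (fun n => Hmon _ s t Hs Hst) (Hq s Hs) (Hq t ltac:(lra))). }
  assert (HqT : b <= q T).
  { exact (is_lim_seq_le (fun _ => b) _ _ _ (fun n => Rlt_le _ _ (HpsiT _))
             (is_lim_seq_const b) (Hq T HT0)). }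
  destruct (nondecr_is_lim_pinfty q Hqmon) as [l [Hl Hql]].
  exists (fun k => psi (phi k)), q. repeat split; try assumption.
  - now apply strictly_increasing_comp.
  - exists l. split; [exact Hl|].
    apply Rbar_lt_le_trans with (q T); [simpl; lra | exact (Hql T HT0)].
Qed.
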